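(* Let $f\ge 1$ and $k\ge 2$ be integers and let there be $n=kf+1$ validators, each maintaining a local DAG as described in the context (Tusk setting). If an honest validator $p_i$ commits a leader vertex $v\in DAG_i[\mathit{round}(w,1)]$ in a wave $w$ (i.e. at least $f+1$ vertices of $DAG_i[\mathit{round}(w,2)]$ have an edge to $v$), then for every honest validator $p_j$, every wave $w'>w$ and every leader vertex $v'$ of wave $w'$ committed by $p_j$ (in particular $v'\in DAG_j[\mathit{round}(w',1)]$; the leader of wave $w'$ is the $\mathit{round}(w',1)$ vertex of an arbitrary validator, selected by a shared coin), there is a path from $v'$ to $v$ in $DAG_j$.
   Context: Setting: $n=kf+1$ validators $p_1,\dots,p_n$, at most $f$ Byzantine, the rest honest. All local DAGs are subsets of one common set of vertices. Each vertex has a round number $r\ge1$ and a source validator; for each validator and round there is at most one vertex (no equivocation), so all local DAGs containing a given validator's vertex for a given round contain the identical vertex with identical edges. Every vertex of round $r\ge2$ has edges to $(k-1)f+1$ vertices of round $r-1$ with distinct sources. Each validator $p_i$ has a local DAG $DAG_i$, closed under edges (if $u\in DAG_i$ then all vertices $u$ has edges to are in $DAG_i$); $DAG_i[r]$ is its set of round-$r$ vertices; a path from $u$ to $v$ is a sequence of contiguous edges from $u$ to $v$. Waves consist of 3 rounds and consecutive waves are pipelined so that round 3 of wave $w$ is round 1 of wave $w+1$: $\mathit{round}(w,j)=2(w-1)+j$ for $j=1,2,3$. A validator $p_i$ commits the leader $v$ of wave $w$ (direct commit rule) if at least $f+1$ vertices of $DAG_i[\mathit{round}(w,2)]$ have an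 edge to $v$. *)

From mathcomp Require Import all_boot.
Set Implicit Arguments. Unset Strict Implicit. Unset Printing Implicit Defensive.

Definition round_of (w j : nat) : nat := 2 * (w - 1) + j.

(* A vertex x is an edge-target of u iff x \in parents u. *)
Definition commits (V : eqType) (f : nat) (rnd : V -> nat)
    (parents : V -> seq V) (D : pred V) (w : nat) (v : V) : Prop :=
  v \in D /\ rnd v = round_of w 1 /\
  exists S : seq V,
    [/\ uniq S, f.+1 <= size S &
        all (fun x => [&& x \in D, rnd x == round_of w 2 & v \in parents x]) S].

Definition dag_path (V : eqType) (parents : V -> seq V) (D : pred V)
    (u v : V) : Prop :=
  exists p : seq V,
    [/\ path (fun a b => b \in parents a) u p, last u p = v &
        all (fun x => x \in D) (u :: p)].

(* Quorum intersection: the f+1 round-(w,2) vertices voting for a committed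
   leader v and the (k-1)f+1 parents of any round-(w,3) vertex have
   kf+2 > n sources in total, hence share a source and, having the same round,
   a vertex, which links every round-(w,3) vertex to v. Every later vertex, in
   particular the leader of a later wave, reaches round (w,3) by descending
   along arbitrary parent edges. *)
From mathcomp Require Import all_boot.
From mathcomp Require Import zify.

Set Implicit Arguments.
Unset Strict Implicit.
Unset Printing Implicit Defensive.

Lemma has_common_of_card_lt (T : finType) (A B : seq T) :
  uniq A -> uniq B -> #|T| < size A + size B -> has (mem A) B.
Proof.
move=> uA uB; apply: contraLR => disjAB.
have uAB : uniq (A ++ B) by rewrite cat_uniq uA uB disjAB.
by rewrite -leqNgt -size_cat -(card_uniqP uAB) max_card.
Qed.

Section Paths.

Variables (V : eqType) (parents : V -> seq V) (D : pred V).

Lemma dag_path_refl v : v \in D -> dag_path parents D v v.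
Proof. by move=> vD; exists [::]; rewrite /= vD. Qed.

Lemma dag_path_cons u x v :
  u \in D -> x \in parents u -> dag_path parents D x v ->
  dag_path parents D u v.
Proof.
move=> uD xu [p [px lp allp]].
by exists (x :: p); split; rewrite //= ?xu ?uD.
Qed.

End Paths.

Section Rounds.

Variables (n q : nat) (V : eqType) (rnd : V -> nat) (src : V -> 'I_n).
Variable parents : V -> seq V.

Hypothesis no_equivocation :
  forall u u', src u = src u' -> rnd u = rnd u' -> u = u'.
Hypothesis parents_spec : forall u, 2 <= rnd u ->
  [/\ size (parents u) = q,
      uniq (map src (parents u)) &
      all (fun x => rnd x == (rnd u).-1) (parents u)].

Lemma uniq_src_same_round (S : seq V) r :
  uniq S -> all (fun x => rnd x == r) S -> uniq (map src S).
Proof.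
move=> uS /allP rS; rewrite map_inj_in_uniq // => a b aS bS.
by move/no_equivocation; apply; rewrite (eqP (rS a aS)) (eqP (rS b bS)).
Qed.

Lemma parent_in_quorum u (S : seq V) :
  2 <= rnd u -> uniq S -> all (fun x => rnd x == (rnd u).-1) S ->
  n < q + size S -> exists2 x, x \in parents u & x \in S.
Proof.
move=> ru uS rS nlt; have [szP uP /allP rP] := parents_spec ru.
have := has_common_of_card_lt uP (uniq_src_same_round uS rS).
rewrite card_ord !size_map szP => /(_ nlt) /hasP [_ /mapP [y yS ->]].
case/mapP=> x xP /no_equivocation eq_xy.
have rxy : rnd x = rnd y by move/allP/(_ y yS)/eqP: rS => ->; apply/eqP/rP.
by exists x; rewrite // -eq_xy.
Qed.

Lemma exists_parent_prev_round u :
  0 < q -> 2 <= rnd u -> exists2 x, x \in parents u & rnd x = (rnd u).-1.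
Proof.
move=> q_gt0 ru; have [szP _ rP] := parents_spec ru; move: q_gt0.
case: (parents u) szP rP => [<- //|x s _ /andP [/eqP rx _] _].
by exists x; rewrite ?mem_head.
Qed.

Variable D : pred V.
Hypothesis D_closed : forall u x, u \in D -> x \in parents u -> x \in D.

Lemma dag_path_round_ge r v :
  0 < q -> 0 < r ->
  (forall u, rnd u = r -> u \in D -> dag_path parents D u v) ->
  forall u, r <= rnd u -> u \in D -> dag_path parents D u v.
Proof.
move=> q_gt0 r_gt0 reach_r u /subnKC; move: (rnd u - r) => d.
elim: d u => [|d IH] u ru uD; first by apply: reach_r uD; rewrite -ru addn0.
have [x xu rx] : exists2 x, x \in parents u & rnd x = (rnd u).-1.
  by apply: exists_parent_prev_round; lia.
apply: dag_path_cons uD xu (IH x _ (D_closed uD xu)); lia.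
Qed.

Lemma dag_path_to_committed f (Dc : pred V) w v u :
  1 <= w -> n < q + f.+1 -> commits f rnd parents Dc w v ->
  rnd u = round_of w 3 -> u \in D -> dag_path parents D u v.
Proof.
move=> w_ge1 nlt [_ [_ [S [uS szS /allP votesS]]]] ru uD.
have rS : all (fun x => rnd x == (rnd u).-1) S.
  apply/allP=> x /votesS /and3P [_ /eqP -> _].
  by rewrite ru /round_of; lia.
have ru2 : 2 <= rnd u by rewrite ru /round_of; lia.
have [x xu xS] :=
  parent_in_quorum ru2 uS rS (leq_trans nlt (leq_add (leqnn q) szS)).
have /and3P [_ _ vx] := votesS x xS.
have xD := D_closed uD xu.
apply: dag_path_cons uD xu (dag_path_cons xD vx _).
exact: dag_path_refl (D_closed xD vx).
Qed.

End Rounds.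

Theorem lemma3 (f k : nat) (hf : 1 <= f) (hk : 2 <= k)
  (V : eqType) (rnd : V -> nat) (src : V -> 'I_(k * f + 1))
  (parents : V -> seq V) (D : 'I_(k * f + 1) -> pred V)
  (byz : {set 'I_(k * f + 1)}) (Hbyz : #|byz| <= f)
  (Hrnd : forall u, 1 <= rnd u)
  (Hnoequiv : forall u u', src u = src u' -> rnd u = rnd u' -> u = u')
  (Hpar : forall u, 2 <= rnd u ->
     [/\ size (parents u) = (k - 1) * f + 1,
         uniq (map src (parents u)) &
         all (fun x => rnd x == (rnd u).-1) (parents u)])
  (Hclosed : forall i u x, u \in D i -> x \in parents u -> x \in D i)
  (i j : 'I_(k * f + 1)) (Hi : i \notin byz) (Hj : j \notin byz)
  (w w' : nat) (v v' : V) (Hw : 1 <= w) (Hww : w < w')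
  (Hc : commits f rnd parents (D i) w v)
  (Hc' : commits f rnd parents (D j) w' v') :
  dag_path parents (D j) v' v.
Proof.
have quorum : k * f + 1 < (k - 1) * f + 1 + f.+1 by nia.
have [v'D [rv' _]] := Hc'.
apply: (dag_path_round_ge Hpar (Hclosed j) (r := round_of w 3)) v'D.
- by rewrite addn1.
- by rewrite /round_of; lia.
- move=> u.
  exact: (dag_path_to_committed Hnoequiv Hpar (Hclosed j) Hw quorum Hc).
- by rewrite rv' /round_of; lia.
Qed.
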